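(* Let $F$ be a diagonal free self-map of $\mathbb{T}^n$. Then $\mathcal{S}(F)$ contains a Hilbert ball $B_H(z,r)$ with $z\in\mathbb{R}^n$ and $r>0$ if and only if $\underline{\mathrm{cw}}(F)>0$. Moreover, in that case, \[ \sup\{r\ge 0 : \exists z\in\mathbb{R}^n,\ B_H(z,r)\subseteq\mathcal{S}(F)\} = \underline{\mathrm{cw}}(F). \]
   Context: $\mathbb{T}=\mathbb{R}\cup\{-\infty\}$, ordered entrywise on $\mathbb{T}^n$. A self-map $F$ of $\mathbb{T}^n$ is order-preserving if $x\le y\Rightarrow F(x)\le F(y)$, and additively homogeneous if $F(\lambda+x)=\lambda+F(x)$ for all $\lambda\in\mathbb{T}$, $x\in\mathbb{T}^n$. An order-preserving, additively homogeneous self-map $F$ of $\mathbb{T}^n$ is diagonal free if for every $i$ and all $x,y\in\mathbb{R}^n$ with $x_j=y_j$ for all $j\ne i$, $F_i(x)=F_i(y)$. $\mathbf{t}(x)=\max_i x_i$, $\mathbf{b}(x)=\min_i x_i$, $\|x\|_H=\mathbf{t}(x)-\mathbf{b}(x)$ on $\mathbb{R}^n$, $B_H(z,r)=\{x\in\mathbb{R}^n: \|x-z\|_H\le r\}$. $\mathcal{S}(F)=\{x\in\mathbb{T}^n: x\le F(x)\}$. The lower Collatz–Wielandt number is $\underline{\mathrm{cw}}(F)=\sup\{\mu\in\mathbb{R}: \exists z\in\mathbb{R}^n,\ F(z)\ge\mu+z\}$. *)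

From Stdlib Require Import Reals Lra List Arith.
Import ListNotations.
Open Scope R_scope.

(** T = R ∪ {-∞}, encoded as [option R] with [None] = -∞. *)
Definition Tt := option R.

Definition leT (a b : Tt) : Prop :=
  match a, b with
  | None, _ => True
  | Some _, None => False
  | Some x, Some y => x <= y
  end.

Definition addT (a b : Tt) : Tt :=
  match a, b with
  | Some x, Some y => Some (x + y)
  | _, _ => None
  end.

Definition idx (n : nat) := {i : nat | (i < n)%nat}.

Definition vecT (n : nat) := idx n -> Tt.
Definition vecR (n : nat) := idx n -> R.

Definition leTv {n} (x y : vecT n) : Prop := forall i, leT (x i) (y i).

Definition embed {n} (x : vecR n) : vecT n := fun i => Some (x i).

Definition order_preserving {n} (F : vecT n -> vecT n) : Prop :=
  forall x y, leTv x y -> leTv (F x) (F y).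

Definition add_homogeneous {n} (F : vecT n -> vecT n) : Prop :=
  forall (lam : Tt) (x : vecT n) (i : idx n),
    F (fun j => addT lam (x j)) i = addT lam (F x i).

Definition diagonal_free {n} (F : vecT n -> vecT n) : Prop :=
  order_preserving F /\ add_homogeneous F /\
  forall (i : idx n) (x y : vecR n),
    (forall j, j <> i -> x j = y j) -> F (embed x) i = F (embed y) i.

Definition extv {n} (x : vecR n) (k : nat) : R :=
  match Compare_dec.lt_dec k n with
  | left h => x (exist _ k h)
  | right _ => 0
  end.

(** t(x) = max_i x_i, b(x) = min_i x_i (meaningful for n >= 1). *)
Definition topv {n} (x : vecR n) : R :=
  fold_right Rmax (extv x 0) (map (extv x) (seq 0 n)).
Definition botv {n} (x : vecR n) : R :=
  fold_right Rmin (extv x 0) (map (extv x) (seq 0 n)).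

Definition hnorm {n} (x : vecR n) : R := topv x - botv x.

Definition hball {n} (z : vecR n) (r : R) (x : vecR n) : Prop :=
  hnorm (fun i => x i - z i) <= r.

Definition Sset {n} (F : vecT n -> vecT n) (x : vecT n) : Prop := leTv x (F x).

Definition ball_in_S {n} (F : vecT n -> vecT n) (z : vecR n) (r : R) : Prop :=
  forall x : vecR n, hball z r x -> Sset F (embed x).

Inductive ER := Fin (r : R) | PInf | MInf.

Definition ER_le (a b : ER) : Prop :=
  match a, b with
  | MInf, _ => True
  | _, PInf => True
  | Fin x, Fin y => x <= y
  | _, _ => False
  end.

Definition ER_lt (a b : ER) : Prop := ER_le a b /\ a <> b.

Definition is_sup (A : R -> Prop) (s : ER) : Prop :=
  (forall a, A a -> ER_le (Fin a) s) /\
  (forall u : ER, (forall a, A a -> ER_le (Fin a) u) -> ER_le s u).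

Definition is_lower_cw {n} (F : vecT n -> vecT n) (c : ER) : Prop :=
  is_sup (fun mu => exists z : vecR n,
            leTv (embed (fun i => mu + z i)) (F (embed z))) c.

(* Since F is order preserving, additively homogeneous and diagonal free, a
   Hilbert ball B_H(z, r) with r >= 0 lies in S(F) exactly when F(z) >= r + z:
   every x in the ball satisfies b + z <= x <= b + r + z with b = min (x - z),
   whence F(x)_i >= b + F(z)_i >= b + r + z_i >= x_i; conversely the point
   z + r e_i lies in the ball, and diagonal freeness gives F(z + r e_i)_i = F(z)_i.
   So the admissible radii are the nonnegative elements of the set whose
   supremum is the lower Collatz-Wielandt number, and both claims are facts
   about suprema. *)
From Stdlib Require Import Reals Lra Lia List Arith Classical_Prop.
Open Scope R_scope.

Lemma idx_eq {n} (i j : idx n) : proj1_sig i = proj1_sig j -> i = j.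
Proof.
  destruct i as [i hi], j as [j hj]; simpl; intros ->.
  f_equal; apply le_unique.
Qed.

Lemma extv_idx {n} (d : vecR n) (i : idx n) : extv d (proj1_sig i) = d i.
Proof.
  unfold extv; destruct (Compare_dec.lt_dec (proj1_sig i) n) as [h|h].
  - f_equal; apply idx_eq; reflexivity.
  - destruct i; simpl in *; lia.
Qed.

Lemma in_map_extv {n} (d : vecR n) y :
  In y (map (extv d) (seq 0 n)) -> exists i : idx n, y = d i.
Proof.
  intros H; apply in_map_iff in H; destruct H as [k [<- Hk]].
  apply in_seq in Hk.
  assert (hk : (k < n)%nat) by lia.
  exists (exist _ k hk); rewrite <- extv_idx; reflexivity.
Qed.

Lemma fold_Rmax_le l a b :
  a <= b -> (forall y, In y l -> y <= b) -> fold_right Rmax a l <= b.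
Proof. induction l; simpl; intros; auto; apply Rmax_lub; auto. Qed.

Lemma fold_Rmin_ge l a b :
  b <= a -> (forall y, In y l -> b <= y) -> b <= fold_right Rmin a l.
Proof. induction l; simpl; intros; auto; apply Rmin_glb; auto. Qed.

Lemma le_fold_Rmax l a y : In y l -> y <= fold_right Rmax a l.
Proof.
  induction l; simpl; intros H; [contradiction|].
  destruct H as [<-|H]; [apply Rmax_l|].
  eapply Rle_trans; [apply IHl; auto | apply Rmax_r].
Qed.

Lemma fold_Rmin_le l a y : In y l -> fold_right Rmin a l <= y.
Proof.
  induction l; simpl; intros H; [contradiction|].
  destruct H as [<-|H]; [apply Rmin_l|].
  eapply Rle_trans; [apply Rmin_r | apply IHl; auto].
Qed.

Lemma botv_le_le_topv {n} (d : vecR n) (i : idx n) : botv d <= d i <= topv d.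
Proof.
  assert (Hin : In (d i) (map (extv d) (seq 0 n))).
  { rewrite <- extv_idx; apply in_map, in_seq; destruct i; simpl; lia. }
  split; [apply fold_Rmin_le | apply le_fold_Rmax]; auto.
Qed.

Lemma hnorm_le_of_bounds {n} (d : vecR n) lo hi :
  lo <= hi -> (forall i, lo <= d i <= hi) -> hnorm d <= hi - lo.
Proof.
  intros Hlh H; unfold hnorm, topv, botv.
  destruct n as [|n]; [simpl; lra|].
  assert (h0 : (0 < S n)%nat) by lia.
  assert (E : extv d 0 = d (exist _ 0%nat h0)) by (rewrite <- extv_idx; reflexivity).
  assert (Hmax : fold_right Rmax (extv d 0) (map (extv d) (seq 0 (S n))) <= hi).
  { apply fold_Rmax_le; [rewrite E; apply H|].
    intros y Hy; destruct (in_map_extv d y Hy) as [i ->]; apply H. }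
  assert (Hmin : lo <= fold_right Rmin (extv d 0) (map (extv d) (seq 0 (S n)))).
  { apply fold_Rmin_ge; [rewrite E; apply H|].
    intros y Hy; destruct (in_map_extv d y Hy) as [i ->]; apply H. }
  lra.
Qed.

Definition cw_certificate {n} (F : vecT n -> vecT n) (mu : R) (z : vecR n) : Prop :=
  leTv (embed (fun i => mu + z i)) (F (embed z)).

Section BallsInS.

Variables (n : nat) (F : vecT n -> vecT n).
Hypothesis HF : diagonal_free F.

Lemma cw_certificate_ball_in_S z r :
  cw_certificate F r z -> ball_in_S F z r.
Proof.
  destruct HF as [Hop [Hhom _]].
  intros Hz x Hx i.
  set (d := fun j => x j - z j); set (b := botv d).
  assert (Hd : forall j, b <= d j <= b + r).
  { intros j; destruct (botv_le_le_topv d j); unfold hball, hnorm in Hx; fold d in Hx; unfold b; lra. }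
  assert (Hle : leTv (fun j => addT (Some b) (embed z j)) (embed x)).
  { intros j; simpl; specialize (Hd j); unfold d in Hd; lra. }
  specialize (Hop _ _ Hle i); rewrite Hhom in Hop.
  specialize (Hz i); specialize (Hd i); unfold d, cw_certificate, embed in *; simpl in *.
  destruct (F (fun j => Some (z j)) i) as [w|]; simpl in *; [|contradiction].
  destruct (F (fun j => Some (x j)) i) as [v|]; simpl in *; [lra|contradiction].
Qed.

Lemma ball_in_S_cw_certificate z r :
  r >= 0 -> ball_in_S F z r -> cw_certificate F r z.
Proof.
  destruct HF as [_ [_ Hdiag]].
  intros Hr Hball i.
  set (bump := fun j : idx n =>
         z j + if Nat.eq_dec (proj1_sig j) (proj1_sig i) then r else 0).
  assert (Hbump : hball z r bump).
  { unfold hball; apply Rle_trans with (r - 0); [|lra].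
    apply hnorm_le_of_bounds; [lra|].
    intros j; unfold bump; destruct (Nat.eq_dec (proj1_sig j) (proj1_sig i)); lra. }
  specialize (Hball bump Hbump i).
  rewrite (Hdiag i bump z) in Hball.
  - unfold bump, cw_certificate, embed in *.
    destruct (F (fun j => Some (z j)) i); simpl in *; [|contradiction].
    destruct (Nat.eq_dec (proj1_sig i) (proj1_sig i)); [lra | congruence].
  - intros j Hj; unfold bump; destruct (Nat.eq_dec (proj1_sig j) (proj1_sig i)) as [e|].
    + exfalso; apply Hj, idx_eq, e.
    + lra.
Qed.

Lemma ball_in_S_iff z r :
  r >= 0 -> (ball_in_S F z r <-> cw_certificate F r z).
Proof.
  intros Hr; split; [apply ball_in_S_cw_certificate; exact Hr | apply cw_certificate_ball_in_S].
Qed.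

End BallsInS.

Lemma ER_le_trans a b c : ER_le a b -> ER_le b c -> ER_le a c.
Proof. destruct a, b, c; simpl; intros; try lra; auto; contradiction. Qed.

Lemma ER_le_antisym a b : ER_le a b -> ER_le b a -> a = b.
Proof. destruct a, b; simpl; intros; try contradiction; auto; f_equal; lra. Qed.

Lemma is_sup_ext (A B : R -> Prop) s :
  (forall a, A a <-> B a) -> is_sup A s -> is_sup B s.
Proof.
  intros HAB [Hub Hlub]; split.
  - intros a Ha; apply Hub, HAB, Ha.
  - intros u Hu; apply Hlub; intros a Ha; apply Hu, HAB, Ha.
Qed.

Lemma is_sup_pos_iff (A : R -> Prop) s :
  is_sup A s -> (ER_lt (Fin 0) s <-> exists a, A a /\ a > 0).
Proof.
  intros [Hub Hlub]; split.
  - intros [H0 Hne].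
    apply NNPP; intros Hno; apply Hne, ER_le_antisym; [exact H0|].
    apply Hlub; intros a Ha; simpl.
    apply Rnot_gt_le; intros Hpos; apply Hno; exists a; auto.
  - intros [a [Ha Hpos]]; specialize (Hub a Ha); split.
    + eapply ER_le_trans; [|exact Hub]; simpl; lra.
    + intros <-; simpl in Hub; lra.
Qed.

(* Negative elements are dominated by a positive one, so they do not matter. *)
Lemma is_sup_nonneg_part (A : R -> Prop) s :
  is_sup A s -> ER_lt (Fin 0) s -> is_sup (fun a => a >= 0 /\ A a) s.
Proof.
  intros Hs Hpos; pose proof Hs as [Hub Hlub]; split.
  - intros a [_ Ha]; apply Hub, Ha.
  - intros u Hu; apply Hlub; intros a Ha.
    destruct (Rle_dec 0 a) as [Hnn|Hneg]; [apply Hu; split; [lra | exact Ha]|].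
    destruct (proj1 (is_sup_pos_iff A s Hs) Hpos) as [a0 [Ha0 Ha0pos]].
    apply ER_le_trans with (Fin a0); [simpl; lra|].
    apply Hu; split; [lra | exact Ha0].
Qed.

Theorem mainTheorem6 (n : nat) (F : vecT n -> vecT n) (c : ER) :
  diagonal_free F ->
  is_lower_cw F c ->
  ((exists (z : vecR n) (r : R), r > 0 /\ ball_in_S F z r) <-> ER_lt (Fin 0) c) /\
  (ER_lt (Fin 0) c ->
     is_sup (fun r => r >= 0 /\ exists z : vecR n, ball_in_S F z r) c).
Proof.
  intros HF Hcw.
  set (Cert := fun mu => exists z : vecR n, cw_certificate F mu z).
  assert (Hradii : forall r, r >= 0 ->
            ((exists z, ball_in_S F z r) <-> Cert r)).
  { intros r Hr; split; intros [z Hz]; exists z; apply (ball_in_S_iff n F HF z r Hr), Hz. }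
  split.
  - rewrite (is_sup_pos_iff Cert c Hcw); split.
    + intros [z [r [Hr Hz]]]; exists r; split; [apply Hradii; [lra | eauto] | exact Hr].
    + intros [r [Hr Hpos]]; destruct (proj2 (Hradii r ltac:(lra)) Hr) as [z Hz]; eauto.
  - intros Hpos; apply is_sup_ext with (A := fun r => r >= 0 /\ Cert r).
    + intros r; split; intros [Hr H]; split; auto; apply (Hradii r Hr), H.
    + apply is_sup_nonneg_part; assumption.
Qed.
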